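(* Let $\mathcal{G}=(V,E)$ be a connected hypergraph with $n$ vertices and minimum edge cardinality $3$ (i.e. $\min_{e\in E}|e|=3$). Let $\lambda_{\max}$ be the largest eigenvalue of $A_{\mathcal{G}}$, with unit eigenvector $X_1=((X_1)_1,\dots,(X_1)_n)^t$ having positive entries, let $\alpha=\min_i (X_1)_i$, and let $\theta$ be the second largest eigenvalue of $A_{\mathcal{G}}$ in absolute value (i.e., if $\lambda_1=\lambda_{\max}\ge\lambda_2\ge\dots\ge\lambda_n$ are the eigenvalues, $\theta=\max_{l\ge 2}|\lambda_l|$). Then $$\operatorname{diam}(\mathcal{G})\le\left\lfloor 1+\frac{\log\big((1-\alpha^2)/\alpha^2\big)}{\log(\lambda_{\max}/\theta)}\right\rfloor.$$
   Context: A hypergraph $\mathcal{G}=(V,E)$ has a finite vertex set $V$ and a set $E$ of subsets of $V$ (edges), each of cardinality at least $2$. Two distinct vertices $i,j$ are adjacent if some edge contains both. The adjacency matrix $A_{\mathcal{G}}$ has $(A_{\mathcal{G}})_{ij}=\sum_{e\in E,\, i,j\in e}\frac{1}{|e|-1}$ for $i\ne j$ and zero diagonal. A path of length $l$ between $v_0$ and $v_l$ is an alternating sequence $v_0e_1v_1e_2\dots e_lv_l$ of distinct vertices and distinct edges with $v_{i-1},v_i\in e_i$; the distance $d(i,j)$ is the minimum length of an $i$–$j$ path, and $\operatorname{diam}(\mathcal{G})=\max_{i,j\in V}d(i,j)$. $\mathcal{G}$ is connected if any two vertices are joined by a path. *)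

From HB Require Import structures.
From mathcomp Require Import all_boot all_order all_algebra.
From mathcomp Require Import reals exp.
Set Implicit Arguments. Unset Strict Implicit. Unset Printing Implicit Defensive.
Import Order.TTheory GRing.Theory Num.Theory.
Local Open Scope ring_scope.

(* A hypergraph on vertex set 'I_n is given by its edge set
   E : {set {set 'I_n}} (each edge of cardinality >= 2 by hypothesis). *)

Definition hadj (R : fieldType) (n : nat) (E : {set {set 'I_n}}) : 'M[R]_n :=
  \matrix_(i, j) (if i == j then 0
                  else \sum_(e in E | (i \in e) && (j \in e)) ((#|e| - 1)%N%:R)^-1).

(* There is a path of length l from u to v: an alternating sequence
   v_0 e_1 v_1 ... e_l v_l of distinct vertices and distinct edges of E with
   v_{k-1}, v_k in e_k, v_0 = u, v_l = v. *)
Definition hpathb (n : nat) (E : {set {set 'I_n}}) (u v : 'I_n) (l : nat) : bool :=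
  [exists vs : (l.+1).-tuple 'I_n, exists es : l.-tuple {set 'I_n},
     [&& uniq vs, uniq es, all (fun e => e \in E) es,
         tnth vs ord0 == u, tnth vs ord_max == v &
         [forall k : 'I_l, (nth u vs k \in tnth es k) && (nth u vs k.+1 \in tnth es k)]]].

Definition hconnected (n : nat) (E : {set {set 'I_n}}) : Prop :=
  forall u v : 'I_n, exists l, hpathb E u v l.

(* Since the vertices of a path are
   distinct, every path has length < n, so searching l in [0, n) is exhaustive
   (the value n is returned only when no path exists). *)
Definition hdist (n : nat) (E : {set {set 'I_n}}) (u v : 'I_n) : nat :=
  find (hpathb E u v) (iota 0 n).

Definition hdiam (n : nat) (E : {set {set 'I_n}}) : nat :=
  \max_(u : 'I_n) \max_(v : 'I_n) hdist E u v.

From HB Require Import structures.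
From mathcomp Require Import all_boot all_order all_algebra.
From mathcomp Require Import reals exp.
From mathcomp Require Import complex.
From mathcomp Require Import ring lra.
Import Order.TTheory GRing.Theory Num.Theory.
Local Open Scope ring_scope.
Set Implicit Arguments. Unset Strict Implicit. Unset Printing Implicit Defensive.

(* Write A^t = lam_max^t X X^T + R_t using the spectral decomposition of the
   symmetric matrix A.  Perron-Frobenius theory for the connected hypergraph
   makes lam_max a simple eigenvalue, and the 3-edge (an odd cycle) rules out
   -lam_max, so every other eigenvalue has modulus at most theta < lam_max.
   Hence (A^t)_uv >= lam_max^t alpha^2 - theta^t (1 - alpha^2).  If this is
   positive, every pair of vertices is joined by a walk of length t in the
   incidence graph, hence by a path of length at most t, and diam <= t; with
   t = diam - 1 this fails, and taking logarithms gives the bound. *)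

Section HypergraphPaths.
Variables (n : nat) (E : {set {set 'I_n}}).

(* Hypergraph paths are the simple paths between vertices in the bipartite
   vertex-edge incidence graph. *)
Definition hinc : rel ('I_n + {set 'I_n}) := fun x y =>
  match x, y with
  | inl i, inr e | inr e, inl i => (e \in E) && (i \in e)
  | _, _ => false
  end.

Definition vertex_of (x : 'I_n + {set 'I_n}) := if x is inl i then Some i else None.
Definition edge_of (x : 'I_n + {set 'I_n}) := if x is inr e then Some e else None.

Lemma vertex_ofK : ocancel vertex_of inl. Proof. by case. Qed.
Lemma edge_ofK : ocancel edge_of inr. Proof. by case. Qed.

Fixpoint hwalk (u : 'I_n) (vs : seq 'I_n) (es : seq {set 'I_n}) : bool :=
  match vs, es with
  | [::], [::] => true
  | w :: vs', e :: es' => [&& e \in E, u \in e, w \in e & hwalk w vs' es']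
  | _, _ => false
  end.

Lemma hwalk_size u vs es : hwalk u vs es -> size es = size vs.
Proof. by elim: vs u es => [|w vs IH] u [|e es] //= /and4P[_ _ _ /IH ->]. Qed.

Lemma hwalk_all u vs es : hwalk u vs es -> all (fun e => e \in E) es.
Proof. by elim: vs u es => [|w vs IH] u [|e es] //= /and4P[-> _ _ /IH]. Qed.

Lemma hwalk_nth u vs es k : hwalk u vs es -> (k < size es)%N ->
  (nth u (u :: vs) k \in nth set0 es k) && (nth u (u :: vs) k.+1 \in nth set0 es k).
Proof.
elim: vs u es k => [|w vs IH] u [|e es] [|k] //= /and4P[_ ue we walk] //.
  by rewrite ue we.
rewrite ltnS => lt_k; have := IH w es k walk lt_k.
rewrite (hwalk_size walk) in lt_k.
have lt_k' : (k < size (w :: vs))%N := ltnW lt_k.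
by rewrite (set_nth_default w u lt_k) (set_nth_default w u lt_k').
Qed.

Lemma hwalk_hpathb u vs es : hwalk u vs es -> uniq (u :: vs) -> uniq es ->
  hpathb E u (last u vs) (size vs).
Proof.
move=> walk uniq_vs uniq_es.
have size_vs : size (u :: vs) == (size vs).+1 by [].
have size_es : size es == size vs by rewrite (hwalk_size walk).
apply/existsP; exists (Tuple size_vs); apply/existsP; exists (Tuple size_es).
apply/and5P; split=> //; first exact: hwalk_all walk.
apply/andP; split; first by rewrite (tnth_nth u) -[last u vs]/(last u (u :: vs)) -nth_last.
apply/forallP => k; rewrite (tnth_nth set0) /=.
by apply: (hwalk_nth walk); rewrite (hwalk_size walk).
Qed.

Lemma hinc_path_hwalk u v s : path hinc (inl u) s -> last (inl u) s = inl v ->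
  [/\ hwalk u (pmap vertex_of s) (pmap edge_of s), last u (pmap vertex_of s) = v
    & size s = (size (pmap vertex_of s)).*2].
Proof.
have [m] := ubnP (size s); elim: m s u => // m IH.
case=> [|[?|e] [|[w|?] s]] //= u size_s; rewrite ?andbF //.
  by move=> _ [->].
case/and3P=> /andP[eE ue] /andP[_ we] pth last_s.
have [walk <- ->] := IH s w (ltnW size_s) pth last_s.
by rewrite eE ue we walk doubleS.
Qed.

Lemma hinc_path_hpathb u v s : path hinc (inl u) s -> last (inl u) s = inl v ->
  exists2 l, (l.*2 <= size s)%N & hpathb E u v l.
Proof.
move=> pth; case: (shortenP pth) => s' pth' uniq_s' sub_s' last_s'.
have [walk <- size_s'] := hinc_path_hwalk pth' last_s'.
exists (size (pmap vertex_of s')).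
  by rewrite -size_s'; apply: uniq_leq_size sub_s'; case/andP: uniq_s'.
apply: hwalk_hpathb walk _ _.
  exact: (pmap_uniq vertex_ofK uniq_s').
by case/andP: uniq_s' => _ uniq_s'; exact: (pmap_uniq edge_ofK uniq_s').
Qed.

Lemma hdist_le u v l : hpathb E u v l -> (hdist E u v <= l)%N.
Proof.
move=> huv; rewrite leqNgt; apply/negP => lt_l.
have l_n : (l < n)%N.
  by apply: leq_trans lt_l _; rewrite -[n in (_ <= n)%N](size_iota 0) find_size.
by have := before_find 0 lt_l; rewrite nth_iota // add0n huv.
Qed.

End HypergraphPaths.

Lemma sumr_neq0_ex (R : nmodType) (I : finType) (P : pred I) (F : I -> R) :
  \sum_(i | P i) F i != 0 -> exists2 i, P i & F i != 0.
Proof.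
case: (pickP [pred i | P i && (F i != 0)]) => [i /andP[]|no_i]; first by exists i.
by rewrite big1 ?eqxx // => i Pi; apply/eqP/negbFE; rewrite -(no_i i) /= Pi.
Qed.

Lemma mulmx_eigenE (R : pzRingType) n (M : 'M[R]_n) (y : 'cV[R]_n) mu i :
  M *m y = mu *: y -> \sum_j M i j * y j 0 = mu * y i 0.
Proof. by move/(congr1 (fun N : 'cV[R]_n => N i 0)); rewrite !mxE. Qed.

Lemma mulmx_expr_eigen (R : comPzRingType) n (M : 'M[R]_n) (y : 'cV[R]_n) mu t :
  M *m y = mu *: y -> M ^+ t *m y = mu ^+ t *: y.
Proof.
move=> eig; elim: t => [|t IH]; first by rewrite !expr0 mul1mx scale1r.
by rewrite exprS -mulmxE -mulmxA IH -scalemxAr eig scalerA -exprSr.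
Qed.

Section HadjWalks.
Variables (R : fieldType) (n : nat) (E : {set {set 'I_n}}).
Local Notation A := (hadj R E).

Lemma hadj_neq0 i j : A i j != 0 -> exists e, hinc E (inl i) (inr e) && hinc E (inr e) (inl j).
Proof.
rewrite mxE; case: (i =P j) => [_|_ /sumr_neq0_ex]; first by rewrite eqxx.
case=> e /andP[eE /andP[ie je]] _.
by exists e; rewrite /= eE ie je.
Qed.

Lemma hadj_expr_walk t u v : (A ^+ t) u v != 0 ->
  exists s, [/\ path (hinc E) (inl u) s, last (inl u) s = inl v & size s = t.*2].
Proof.
elim: t v => [|t IH] v.
  rewrite expr0 mxE; case: (u =P v) => [<- _|_]; last by rewrite eqxx.
  by exists [::].
rewrite exprSr -mulmxE mxE => /sumr_neq0_ex[w _].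
rewrite mulf_eq0 negb_or => /andP[/IH[s [pth last_s size_s]] /hadj_neq0[e inc_e]].
exists (rcons (rcons s (inr e)) (inl v)).
by rewrite !rcons_path pth last_s !last_rcons inc_e !size_rcons size_s doubleS.
Qed.

Lemma hdist_le_hadj_expr t u v : (A ^+ t) u v != 0 -> (hdist E u v <= t)%N.
Proof.
case/hadj_expr_walk=> s [pth last_s size_s].
have [l l_s huv] := hinc_path_hpathb pth last_s.
by apply: leq_trans (hdist_le huv) _; rewrite -leq_double -size_s.
Qed.

Lemma hdiam_le_hadj_expr t : (forall u v, (A ^+ t) u v != 0) -> (hdiam E <= t)%N.
Proof.
move=> neq0; apply/bigmax_leqP => u _; apply/bigmax_leqP => v _.
exact: hdist_le_hadj_expr.
Qed.

End HadjWalks.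

Section PerronFrobenius.
Variables (R : realFieldType) (n : nat) (E : {set {set 'I_n}}).
Local Notation A := (hadj R E).

Lemma hadj_ge0 i j : 0 <= A i j.
Proof.
rewrite mxE; case: (i == j) => //; apply: sumr_ge0 => e _.
by rewrite invr_ge0 ler0n.
Qed.

Lemma hadj_sym i j : A i j = A j i.
Proof.
rewrite !mxE eq_sym; case: (j == i) => //; apply: eq_bigl => e.
by rewrite [X in _ && X]andbC.
Qed.

Lemma hadj_sum_le0 (w : 'I_n -> R) a b : (forall j, 0 <= w j) ->
  \sum_j A a j * w j <= 0 -> 0 < A a b -> w b = 0.
Proof.
move=> w_ge0 sum_le0 Aab_gt0.
have Aw_ge0 j : 0 <= A a j * w j by rewrite mulr_ge0 ?hadj_ge0.
have sum_eq0 : \sum_j A a j * w j = 0 by apply/eqP; rewrite eq_le sum_le0 sumr_ge0.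
have /eqP := psumr_eq0P (fun j _ => Aw_ge0 j) sum_eq0 (i := b) isT.
by rewrite mulf_eq0 gt_eqF //= => /eqP.
Qed.

Lemma abs_eigen_le_hadj (y : 'cV[R]_n) mu i : A *m y = mu *: y ->
  `|mu| * `|y i 0| <= \sum_j A i j * `|y j 0|.
Proof.
rewrite -normrM => /(mulmx_eigenE i) <-.
apply: le_trans (ler_norm_sum _ _ _) _.
by apply: ler_sum => j _; rewrite normrM ger0_norm ?hadj_ge0.
Qed.

Hypothesis hE2 : forall e, e \in E -> (2 <= #|e|)%N.

Lemma hadj_gt0 e i j : e \in E -> i \in e -> j \in e -> i != j -> 0 < A i j.
Proof.
move=> eE ie je nij; rewrite mxE (negPf nij) (bigD1 e) /=; last by rewrite eE ie je.
have inv_gt0 : 0 < ((#|e| - 1)%N%:R : R)^-1 by rewrite invr_gt0 ltr0n subn_gt0 hE2.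
apply: (lt_le_trans inv_gt0); rewrite lerDl; apply: sumr_ge0 => *.
by rewrite invr_ge0 ler0n.
Qed.

Hypothesis hcon : hconnected E.

(* Zeros propagate along hyperedges: at a zero a of w the nonnegative sum
   \sum_j A a j * w j is <= 0, so w vanishes at every neighbour of a. *)
Lemma hconnected_vanish (w : 'I_n -> R) c u : (forall j, 0 <= w j) ->
  (forall a, \sum_j A a j * w j <= c * w a) -> w u = 0 -> forall v, w v = 0.
Proof.
move=> w_ge0 super wu0 v; have [l] := hcon u v.
case/existsP=> vs /existsP[es /and5P[uniq_vs _ allE /eqP vs0]].
case/andP=> /eqP vsl /forallP vs_es.
suff w_vs k' : (k' <= l)%N -> w (nth u vs k') = 0.
  by rewrite -vsl (tnth_nth u) w_vs.
elim: k' => [|k' IH] le_k'l; first by rewrite -(tnth_nth u vs ord0) vs0.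
have /andP[in1 in2] := vs_es (Ordinal le_k'l).
have eE : tnth es (Ordinal le_k'l) \in E := allP allE _ (mem_tnth _ es).
apply: (hadj_sum_le0 w_ge0 _ (hadj_gt0 eE in1 in2 _)).
  by apply: le_trans (super _) _; rewrite IH ?mulr0 // ltnW.
by rewrite nth_uniq ?size_tuple ?ltnS ?(ltnW le_k'l) // eqn_leq ltnn andbF.
Qed.

Variables (X : 'cV[R]_n) (l0 : R).
Hypotheses (hX : A *m X = l0 *: X) (Xpos : forall i, 0 < X i 0).

Lemma sum_hadj_scaleX c i : \sum_j A i j * (c * X j 0) = c * (l0 * X i 0).
Proof.
by rewrite -(mulmx_eigenE i hX) mulr_sumr; apply: eq_bigr => j _; rewrite mulrCA.
Qed.

Lemma sum_hadj_le_scale (w : 'I_n -> R) c i : (forall j, w j <= c * X j 0) ->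
  \sum_j A i j * w j <= c * (l0 * X i 0).
Proof.
move=> w_le; rewrite -sum_hadj_scaleX.
by apply: ler_sum => j _; rewrite ler_wpM2l ?hadj_ge0.
Qed.

Lemma tight_scale (f : 'I_n -> R) (k : 'I_n) :
  exists2 c, (forall i, f i <= c * X i 0) & exists i, f i = c * X i 0.
Proof.
case: (@arg_maxP _ _ _ k predT (fun i => f i / X i 0) isT) => im _ im_max.
exists (f im / X im 0) => [i|]; last by exists im; rewrite divfK ?gt_eqF.
by rewrite -ler_pdivrMr //; apply: im_max.
Qed.

Lemma scale_gt0 (f : 'I_n -> R) c k : (forall i, f i <= c * X i 0) -> 0 < f k -> 0 < c.
Proof.
by move=> f_le fk_gt0; rewrite -(pmulr_lgt0 _ (Xpos k)) (lt_le_trans fk_gt0).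
Qed.

Lemma perron_bound (y : 'cV[R]_n) mu : y != 0 -> A *m y = mu *: y -> `|mu| <= l0.
Proof.
move=> /cV0Pn[k yk_neq0] eig.
have [c y_le [im y_im]] := tight_scale (fun i => `|y i 0|) k.
have c_gt0 : 0 < c by apply: (scale_gt0 (k := k) y_le); rewrite /= normr_gt0.
have := le_trans (abs_eigen_le_hadj im eig) (sum_hadj_le_scale im y_le).
by rewrite y_im mulrCA ler_pM2l // ler_pM2r.
Qed.

Lemma perron_abs_eigen (y : 'cV[R]_n) mu : y != 0 -> A *m y = mu *: y ->
  `|mu| = l0 -> exists2 c, 0 < c & forall i, `|y i 0| = c * X i 0.
Proof.
move=> /cV0Pn[k yk_neq0] eig abs_mu.
have [c y_le [im y_im]] := tight_scale (fun i => `|y i 0|) k.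
exists c => [|i]; first by apply: (scale_gt0 (k := k) y_le); rewrite /= normr_gt0.
apply/eqP; rewrite eq_sym -subr_eq0; apply/eqP.
apply: (@hconnected_vanish (fun j => c * X j 0 - `|y j 0|) l0 im) => [j|a|] /=.
- by rewrite subr_ge0.
- have := abs_eigen_le_hadj a eig; rewrite abs_mu.
  under eq_bigr do rewrite mulrBr; rewrite sumrB sum_hadj_scaleX; lra.
- by rewrite y_im subrr.
Qed.

Lemma perron_eigenspace (y : 'cV[R]_n) (k : 'I_n) : A *m y = l0 *: y ->
  exists c, y = c *: X.
Proof.
move=> eig; have [c y_ge [im y_im]] := tight_scale (fun i => - y i 0) k.
exists (- c); apply/matrixP => i z; rewrite ord1 !mxE mulNr; apply/eqP.
rewrite -subr_eq0 opprK; apply/eqP.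
apply: (@hconnected_vanish (fun j => y j 0 + c * X j 0) l0 im) => [j|a|] /=.
- by have := y_ge j; lra.
- under eq_bigr do rewrite mulrDr.
  by rewrite big_split /= sum_hadj_scaleX (mulmx_eigenE a eig); lra.
- by rewrite -y_im subrr.
Qed.

Lemma perron_root_gt0 e : e \in E -> 0 < l0.
Proof.
move=> eE; have /card_gt1P[a [b [ae be nab]]] := hE2 eE.
rewrite -(pmulr_lgt0 _ (Xpos a)) -(mulmx_eigenE a hX) (bigD1 b) //=.
apply: (lt_le_trans (mulr_gt0 (hadj_gt0 eE ae be nab) (Xpos b))).
by rewrite lerDl; apply: sumr_ge0 => j _; rewrite mulr_ge0 ?hadj_ge0 ?ltW.
Qed.

Lemma neg_eigen_sign (z : 'cV[R]_n) c i j : A *m z = - l0 *: z ->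
  (forall k, `|z k 0| = c * X k 0) -> 0 < z i 0 -> 0 < A i j -> z j 0 <= 0.
Proof.
move=> eig abs_z zi_gt0 Aij_gt0.
suff : `|z j 0| + z j 0 = 0 by have := normr_ge0 (z j 0); lra.
apply: (@hadj_sum_le0 (fun k => `|z k 0| + z k 0) i) => // [k|].
  by have := ler_norm (- z k 0); rewrite normrN; lra.
have zi : z i 0 = c * X i 0 by rewrite -abs_z gtr0_norm.
under eq_bigr do rewrite mulrDr abs_z.
by rewrite big_split /= sum_hadj_scaleX (mulmx_eigenE i eig) zi; lra.
Qed.

(* An eigenvector for -l0 has modulus proportional to X and changes sign
   along every edge, which is impossible on a triangle inside a 3-edge. *)
Lemma perron_neg (y : 'cV[R]_n) : (exists2 e, e \in E & (2 < #|e|)%N) ->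
  A *m y = - l0 *: y -> y = 0.
Proof.
case=> e eE /card_gt2P[a [b [d [[ae be de] [nab nbd nda]]]]] eig.
apply/eqP; apply: contraT => y_neq0.
have abs_l0 : `|- l0| = l0 by rewrite normrN ger0_norm // ltW // (perron_root_gt0 eE).
have [c c_gt0 abs_y] := perron_abs_eigen y_neq0 eig abs_l0.
have y_neq0' i : y i 0 != 0 by rewrite -normr_eq0 abs_y mulf_neq0 ?gt_eqF.
have opp_eig : A *m - y = - l0 *: - y by rewrite mulmxN eig scalerN.
have opp_entry i : (- y) i 0 = - y i 0 by rewrite mxE.
have abs_opp i : `|(- y) i 0| = c * X i 0 by rewrite opp_entry normrN.
have sign i j : 0 < A i j -> y i 0 * y j 0 < 0.
  move=> Aij_gt0; have yj_neq0 := y_neq0' j.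
  case: (ltrgt0P (y i 0)) => [yi_gt0|yi_lt0|yi0]; last by move: (y_neq0' i); rewrite yi0 eqxx.
    have := neg_eigen_sign eig abs_y yi_gt0 Aij_gt0.
    by rewrite le_eqVlt (negPf yj_neq0) /= => yj_lt0; rewrite pmulr_rlt0.
  have := neg_eigen_sign (i := i) (j := j) opp_eig abs_opp; rewrite !opp_entry oppr_gt0 oppr_le0.
  move=> /(_ yi_lt0 Aij_gt0); rewrite le_eqVlt eq_sym (negPf yj_neq0) /= => yj_gt0.
  by rewrite nmulr_rlt0.
have := sign a b (hadj_gt0 eE ae be nab); have := sign b d (hadj_gt0 eE be de nbd).
have := sign d a (hadj_gt0 eE de ae nda); have := sqr_ge0 (y b 0); nra.
Qed.

End PerronFrobenius.

Lemma char_poly_conj (F : fieldType) n (Q D : 'M[F]_n) :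
  Q \in unitmx -> char_poly (invmx Q *m D *m Q) = char_poly D.
Proof.
move=> Q_unit.
pose Qi := map_mx polyC (invmx Q); pose Qp := map_mx polyC Q.
have QiQ : Qi *m Qp = 1%:M by rewrite -map_mxM mulVmx // map_mx1.
rewrite /char_poly /char_poly_mx !map_mxM -/Qi -/Qp.
rewrite {1}(_ : 'X%:M = Qi *m 'X%:M *m Qp); last first.
  by rewrite -mulmxA -scalar_mxC mulmxA QiQ mul1mx.
by rewrite -mulmxBl -mulmxBr !det_mulmx mulrAC -det_mulmx QiQ det1 mul1r.
Qed.

Section ComplexParts.
Variable R : rcfType.
Implicit Types z w : R[i].

Lemma Re_mul_conj z w :
  complex.Re (z * Num.conj w) = complex.Re z * complex.Re w + complex.Im z * complex.Im w.
Proof. by case: z w => [a b] [c d] /=; ring. Qed.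

Lemma Re_conj_mul z w :
  complex.Re (Num.conj z * w) = complex.Re z * complex.Re w + complex.Im z * complex.Im w.
Proof. by case: z w => [a b] [c d] /=; ring. Qed.

Lemma Im_mul_conj z w :
  complex.Im (z * Num.conj w) = complex.Im z * complex.Re w - complex.Re z * complex.Im w.
Proof. by case: z w => [a b] [c d] /=; ring. Qed.

Lemma Re_mul_real z (x : R) : complex.Re (z * x%:C%C) = complex.Re z * x.
Proof. by case: z => a b /=; ring. Qed.

Lemma Im_mul_real z (x : R) : complex.Im (z * x%:C%C) = complex.Im z * x.
Proof. by case: z => a b /=; ring. Qed.

Lemma Re_real_mul (x : R) z : complex.Re (x%:C%C * z) = x * complex.Re z.
Proof. by case: z => a b /=; ring. Qed.

Lemma Im_real_mul (x : R) z : complex.Im (x%:C%C * z) = x * complex.Im z.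
Proof. by case: z => a b /=; ring. Qed.

Lemma Re_bool (b : bool) : complex.Re (b%:R : R[i]) = b%:R.
Proof. by case: b. Qed.

Lemma Im_bool (b : bool) : complex.Im (b%:R : R[i]) = 0.
Proof. by case: b. Qed.

End ComplexParts.

Section RealSpectral.
Local Open Scope sesquilinear_scope.
Variables (R : rcfType) (n : nat) (A : 'M[R]_n).

Local Notation AC := (map_mx (real_complex R) A).
Local Notation P := (spectralmx AC).
Local Notation d := (spectral_diag AC).

(* The rows p_j of the unitary matrix diagonalising A over R[i] are complex
   eigenvectors; their real and imaginary parts are real eigenvectors, and
   spec_proj j is the real part of the rank-one projector p_j^* p_j. *)
Definition spec_val (j : 'I_n) : R := complex.Re (d 0 j).
Definition spec_re (j : 'I_n) : 'cV[R]_n := \col_k complex.Re (P j k).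
Definition spec_im (j : 'I_n) : 'cV[R]_n := \col_k complex.Im (P j k).
Definition spec_proj (j : 'I_n) : 'M[R]_n :=
  spec_re j *m (spec_re j)^T + spec_im j *m (spec_im j)^T.

Lemma spec_projE j u v :
  spec_proj j u v = spec_re j u 0 * spec_re j v 0 + spec_im j u 0 * spec_im j v 0.
Proof. by rewrite !mxE !big_ord1 !mxE. Qed.

Lemma spec_proj_le j u v :
  `|spec_proj j u v| <= (spec_proj j u u + spec_proj j v v) / 2.
Proof.
rewrite !spec_projE; set a := spec_re j u 0; set b := spec_re j v 0.
set c := spec_im j u 0; set e := spec_im j v 0.
have := sqr_ge0 (a - b); have := sqr_ge0 (c - e).
have := sqr_ge0 (a + b); have := sqr_ge0 (c + e).
by rewrite ler_norml; move=> *; apply/andP; split; nra.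
Qed.

Lemma spec_complete : \sum_j spec_proj j = 1%:M.
Proof.
have PtP : P ^t* *m P = 1%:M.
  by rewrite -invmx_unitary ?spectral_unitarymx // mulVmx ?spectral_unit.
apply/matrixP => u v; rewrite summxE.
have /(congr1 (@complex.Re R)) := congr1 (fun M : 'M[R[i]]_n => M u v) PtP.
rewrite !mxE raddf_sum Re_bool => <-; apply: eq_bigr => j _.
by rewrite spec_projE !mxE /= Re_conj_mul.
Qed.

Lemma P_mul_adjoint : P *m P ^t* = 1%:M.
Proof. exact/unitarymxP/spectral_unitarymx. Qed.

Lemma spec_orth j j' :
  \sum_k (spec_re j k 0 * spec_re j' k 0 + spec_im j k 0 * spec_im j' k 0) = (j == j')%:R.
Proof.
have /(congr1 (@complex.Re R)) := congr1 (fun M : 'M[R[i]]_n => M j j') P_mul_adjoint.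
rewrite !mxE raddf_sum Re_bool => <-; apply: eq_bigr => k _.
by rewrite !mxE /= Re_mul_conj.
Qed.

Lemma spec_orthI j j' :
  \sum_k (spec_im j k 0 * spec_re j' k 0 - spec_re j k 0 * spec_im j' k 0) = 0.
Proof.
have /(congr1 (@complex.Im R)) := congr1 (fun M : 'M[R[i]]_n => M j j') P_mul_adjoint.
rewrite !mxE raddf_sum Im_bool => sum0; rewrite -[RHS]sum0; apply: eq_bigr => k _.
by rewrite !mxE /= Im_mul_conj.
Qed.

Hypothesis A_sym : forall i j, A i j = A j i.

Lemma AC_hermitian : AC \is hermsymmx.
Proof.
apply: realsym_hermsym.
  by apply/is_hermitianmxP; rewrite expr0 scale1r; apply/matrixP => i j; rewrite !mxE A_sym.
by apply/mxOverP => i j; rewrite mxE complex_real.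
Qed.

Lemma spectral_decomposition : AC = invmx P *m diag_mx d *m P.
Proof. exact/orthomx_spectralP/hermitian_normalmx/AC_hermitian. Qed.

Lemma spec_val_real j : d 0 j = (spec_val j)%:C%C.
Proof.
have /mxOverP/(_ 0 j) := hermitian_spectral_diag_real AC_hermitian.
by rewrite /spec_val; case: (d 0 j) => a b; rewrite complex_real => /eqP ->.
Qed.

Lemma spec_row_eigen j k : \sum_l P j l * AC l k = (spec_val j)%:C%C * P j k.
Proof.
have := congr1 (fun M : 'M[R[i]]_n => M j k) (congr1 (mulmx P) spectral_decomposition).
rewrite -!mulmxA mulKVmx ?spectral_unit // !mxE => ->.
rewrite (bigD1 j) //= big1 ?addr0 => [|l /negPf l_neq].
  by rewrite !mxE eqxx mulr1n spec_val_real.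
by rewrite !mxE eq_sym l_neq mulr0n mul0r.
Qed.

Lemma spec_re_eigen j : A *m spec_re j = spec_val j *: spec_re j.
Proof.
apply/matrixP => k z; rewrite ord1 /spec_re !mxE.
have /(congr1 (@complex.Re R)) := spec_row_eigen j k.
rewrite raddf_sum Re_real_mul => <-; apply: eq_bigr => l _.
by rewrite /= !mxE Re_mul_real A_sym mulrC.
Qed.

Lemma spec_im_eigen j : A *m spec_im j = spec_val j *: spec_im j.
Proof.
apply/matrixP => k z; rewrite ord1 /spec_im !mxE.
have /(congr1 (@complex.Im R)) := spec_row_eigen j k.
rewrite raddf_sum Im_real_mul => <-; apply: eq_bigr => l _.
by rewrite /= !mxE Im_mul_real A_sym mulrC.
Qed.

Lemma spec_expr t : A ^+ t = \sum_j spec_val j ^+ t *: spec_proj j.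
Proof.
rewrite -[A ^+ t]mulmx1 -spec_complete mulmx_sumr; apply: eq_bigr => j _.
rewrite /spec_proj mulmxDr !mulmxA !(mulmx_expr_eigen t (spec_re_eigen j)).
by rewrite (mulmx_expr_eigen t (spec_im_eigen j)) -!scalemxAl scalerDr.
Qed.

Lemma spec_perm (lam : 'I_n -> R) : char_poly A = \prod_i ('X - (lam i)%:P) ->
  perm_eq [seq spec_val j | j <- enum 'I_n] [seq lam i | i <- enum 'I_n].
Proof.
move=> char_A.
have char_d : char_poly AC = \prod_j ('X - ((spec_val j)%:C%C)%:P).
  rewrite {1}spectral_decomposition char_poly_conj ?spectral_unit //.
  rewrite char_poly_trig ?diag_mx_is_trig //.
  by apply: eq_bigr => j _; rewrite mxE eqxx mulr1n spec_val_real.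
have char_lam : char_poly AC = \prod_i ('X - ((lam i)%:C%C)%:P).
  by rewrite -map_char_poly char_A map_prod_XsubC.
have : perm_eq [seq (spec_val j)%:C%C | j <- enum 'I_n] [seq (lam i)%:C%C | i <- enum 'I_n].
  apply: prod_XsubC_eq; rewrite !big_map.
  by move: char_d; rewrite char_lam [index_enum _]unlock => ->.
by move/(perm_map (@complex.Re R)); rewrite -!map_comp.
Qed.

End RealSpectral.

Lemma card_count (T : finType) (P : pred T) : #|P| = count P (enum T).
Proof. by rewrite cardE enumT /enum_mem size_filter. Qed.

Section SpectralGap.
Variables (R : rcfType) (n : nat) (E : {set {set 'I_n}}).
Variables (lam : 'I_n -> R) (i0 : 'I_n) (X : 'cV[R]_n).
Hypotheses (hE2 : forall e, e \in E -> (2 <= #|e|)%N) (hcon : hconnected E).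
Hypothesis htri : exists2 e, e \in E & (2 < #|e|)%N.
Hypothesis hchar : char_poly (hadj R E) = \prod_(i < n) ('X - (lam i)%:P).
Hypotheses (hX : hadj R E *m X = lam i0 *: X) (Xpos : forall i, 0 < X i 0).
Hypothesis X_unit : \sum_(i < n) X i 0 ^+ 2 = 1.

Local Notation A := (hadj R E).
Local Notation l0 := (lam i0).
Local Notation theta := (\big[Num.max/0]_(i < n | i != i0) `|lam i|).
Local Notation alpha := (\big[Num.min/X i0 0]_(i < n) X i 0).

Let A_sym : forall i j, A i j = A j i := @hadj_sym R n E.

Lemma lmax_gt0 : 0 < l0.
Proof. case: htri => e eE _; exact: (perron_root_gt0 hE2 hX Xpos eE). Qed.

Lemma sum_scaleX (f : 'I_n -> R) c : (forall k, f k = c * X k 0 ^+ 2) -> \sum_k f k = c.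
Proof. by move=> fE; rewrite (eq_bigr _ (fun k _ => fE k)) -mulr_sumr X_unit mulr1. Qed.

Lemma spec_lmax_rows j : spec_val A j = l0 -> exists ca cb,
  [/\ spec_re A j = ca *: X, spec_im A j = cb *: X & ca ^+ 2 + cb ^+ 2 = 1].
Proof.
move=> val_j; have eig_re := spec_re_eigen A_sym j.
have eig_im := spec_im_eigen A_sym j.
rewrite val_j in eig_re eig_im.
have [ca re_j] := perron_eigenspace hE2 hcon hX Xpos i0 eig_re.
have [cb im_j] := perron_eigenspace hE2 hcon hX Xpos i0 eig_im.
exists ca, cb; split=> //.
have := spec_orth A j j; rewrite eqxx re_j im_j (@sum_scaleX _ (ca ^+ 2 + cb ^+ 2)) //.
by move=> k; rewrite !mxE; ring.
Qed.

Lemma spec_lmax_uniq j1 j2 : spec_val A j1 = l0 -> spec_val A j2 = l0 -> j1 = j2.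
Proof.
move=> /spec_lmax_rows[a1 [b1 [re1 im1 norm1]]] /spec_lmax_rows[a2 [b2 [re2 im2 norm2]]].
apply/eqP; apply: contraT => j12.
have re_dot : a1 * a2 + b1 * b2 = 0.
  have := spec_orth A j1 j2; rewrite (negPf j12) re1 im1 re2 im2.
  rewrite (@sum_scaleX _ (a1 * a2 + b1 * b2)) //.
  by move=> k; rewrite !mxE; ring.
have im_dot : b1 * a2 - a1 * b2 = 0.
  have := spec_orthI A j1 j2.
  rewrite re1 im1 re2 im2 (@sum_scaleX _ (b1 * a2 - a1 * b2)) //.
  by move=> k; rewrite !mxE; ring.
have : (a1 ^+ 2 + b1 ^+ 2) * (a2 ^+ 2 + b2 ^+ 2) =
       (a1 * a2 + b1 * b2) ^+ 2 + (b1 * a2 - a1 * b2) ^+ 2 by ring.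
by rewrite norm1 norm2 re_dot im_dot mulr1 expr0n /= addr0 => /eqP; rewrite oner_eq0.
Qed.

Lemma lam_neq_lmax i : i != i0 -> lam i != l0.
Proof.
move=> i_neq; apply/negP => /eqP lam_i.
have : (1 < count (preim lam (pred1 l0)) (enum 'I_n))%N.
  by rewrite -card_count; apply/card_gt1P; exists i, i0; rewrite !inE lam_i eqxx.
rewrite -count_map -(permP (spec_perm A_sym hchar)) count_map -card_count.
case/card_gt1P => j1 [j2 [/eqP val1 /eqP val2]].
by rewrite (spec_lmax_uniq val1 val2) eqxx.
Qed.

Lemma lam_lt_lmax i : i != i0 -> `|lam i| < l0.
Proof.
move=> i_neq.
have : eigenvalue A (lam i).
  rewrite eigenvalue_root_char hchar; apply/rootP; rewrite horner_prod.
  by apply/eqP/prodf_eq0; exists i => //; rewrite hornerXsubC subrr.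
case/eigenvalueP => v eig_v v_neq0.
have A_tr : A^T = A by apply/matrixP => k l; rewrite mxE hadj_sym.
have eig : A *m v^T = lam i *: v^T by rewrite -{1}A_tr -trmx_mul eig_v linearZ.
have vT_neq0 : v^T != 0 by rewrite trmx_eq0.
rewrite lt_neqAle (perron_bound hX Xpos vT_neq0 eig) andbT.
apply/negP => /eqP abs_lam; case: (lerP 0 (lam i)) => [lam_ge0|lam_lt0].
  by move: (lam_neq_lmax i_neq); rewrite -abs_lam ger0_norm ?eqxx.
have eig_neg : A *m v^T = - l0 *: v^T by rewrite -abs_lam ltr0_norm // opprK.
by move: vT_neq0; rewrite (perron_neg hE2 hcon hX Xpos htri eig_neg) eqxx.
Qed.

Lemma theta_ge0 : 0 <= theta.
Proof. exact: bigmax_ge_id. Qed.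

Lemma theta_lt_lmax : theta < l0.
Proof. by apply: bigmax_lt => [|i /lam_lt_lmax]; rewrite ?lmax_gt0. Qed.

Lemma spec_val_le_theta j0 j : spec_val A j0 = l0 -> j != j0 -> `|spec_val A j| <= theta.
Proof.
move=> val_j0 j_neq.
have : spec_val A j \in [seq lam i | i <- enum 'I_n].
  by rewrite -(perm_mem (spec_perm A_sym hchar)) map_f ?mem_enum.
case/mapP => i _ val_j; rewrite val_j; apply: le_bigmax_cond.
by apply: contraNneq j_neq => i_i0; apply/eqP/spec_lmax_uniq; rewrite ?val_j ?i_i0.
Qed.

Lemma exists_spec_lmax : exists j0, spec_val A j0 = l0.
Proof.
have : l0 \in [seq spec_val A j | j <- enum 'I_n].
  by rewrite (perm_mem (spec_perm A_sym hchar)) map_f ?mem_enum.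
by case/mapP => j0 _ ->; exists j0.
Qed.

Lemma spec_proj_lmax j0 : spec_val A j0 = l0 -> spec_proj A j0 = X *m X^T.
Proof.
case/spec_lmax_rows => ca [cb [re0 im0 norm0]].
rewrite /spec_proj re0 im0 !linearZ /= -!scalemxAl !scalerA.
by rewrite -scalerDl -!expr2 norm0 scale1r.
Qed.

Lemma sum_spec_proj_diag j0 w : spec_val A j0 = l0 ->
  \sum_(j | j != j0) spec_proj A j w w = 1 - X w 0 ^+ 2.
Proof.
move=> val_j0; have := congr1 (fun M : 'M[R]_n => M w w) (spec_complete A).
rewrite summxE (bigD1 j0) //= spec_proj_lmax // !mxE big_ord1 !mxE eqxx mulr1n.
by rewrite expr2 => <-; rewrite addrC addrK.
Qed.

Lemma alpha_gt0 : 0 < alpha.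
Proof. by apply: lt_bigmin => // i _; apply: Xpos. Qed.

Lemma alpha_sqr_le i : alpha ^+ 2 <= X i 0 ^+ 2.
Proof. by rewrite !expr2; apply: ler_pM; rewrite ?bigmin_le ?ltW ?alpha_gt0. Qed.

Lemma alpha_ratio_ge1 : 1 <= (1 - alpha ^+ 2) / alpha ^+ 2.
Proof.
have [e _ /card_gt2P[a [b [_ [_ [a_neq_b _ _]]]]]] := htri.
have : X a 0 ^+ 2 + X b 0 ^+ 2 <= 1.
  rewrite -X_unit (bigD1 a) //= (bigD1 b) 1?eq_sym //= addrA lerDl.
  by apply: sumr_ge0 => k _; apply: sqr_ge0.
rewrite ler_pdivlMr ?exprn_gt0 ?alpha_gt0 // mul1r.
by have := alpha_sqr_le a; have := alpha_sqr_le b; lra.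
Qed.

Lemma spec_rest_le j0 t u v : spec_val A j0 = l0 ->
  `|\sum_(j | j != j0) spec_val A j ^+ t * spec_proj A j u v| <=
    theta ^+ t * (1 - alpha ^+ 2).
Proof.
move=> val_j0; apply: le_trans (ler_norm_sum _ _ _) _.
apply: (@le_trans _ _ (theta ^+ t * (((1 - X u 0 ^+ 2) + (1 - X v 0 ^+ 2)) / 2))).
  rewrite -!(sum_spec_proj_diag _ val_j0) -big_split mulr_suml mulr_sumr.
  apply: ler_sum => j j_neq; rewrite normrM normrX.
  apply: ler_pM; rewrite ?exprn_ge0 ?normr_ge0 ?spec_proj_le //.
  by apply: lerXn2r; rewrite ?nnegrE ?normr_ge0 ?theta_ge0 ?(spec_val_le_theta val_j0).
apply: ler_wpM2l; first exact: exprn_ge0 theta_ge0.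
by have := alpha_sqr_le u; have := alpha_sqr_le v; lra.
Qed.

Lemma hadj_expr_ge t u v :
  l0 ^+ t * alpha ^+ 2 - theta ^+ t * (1 - alpha ^+ 2) <= (A ^+ t) u v.
Proof.
have [j0 val_j0] := exists_spec_lmax.
have expand : (A ^+ t) u v = l0 ^+ t * (X u 0 * X v 0) +
    \sum_(j | j != j0) spec_val A j ^+ t * spec_proj A j u v.
  rewrite (spec_expr A_sym) summxE (bigD1 j0) //= mxE val_j0.
  rewrite spec_proj_lmax // mxE big_ord1 mxE.
  by congr (_ + _); apply: eq_bigr => j _; rewrite mxE.
have := spec_rest_le t u v val_j0; rewrite ler_norml expand => /andP[rest_ge _].
have : l0 ^+ t * alpha ^+ 2 <= l0 ^+ t * (X u 0 * X v 0).
  apply: ler_wpM2l; first exact/exprn_ge0/ltW/lmax_gt0.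
  by rewrite expr2; apply: ler_pM; rewrite ?bigmin_le ?ltW ?alpha_gt0.
lra.
Qed.

Lemma hdiam_le_gap t : theta ^+ t * (1 - alpha ^+ 2) < l0 ^+ t * alpha ^+ 2 ->
  (hdiam E <= t)%N.
Proof.
move=> gap; apply: (hdiam_le_hadj_expr (R := R)) => u v.
by rewrite gt_eqF // (lt_le_trans _ (hadj_expr_ge t u v)) // subr_gt0.
Qed.

End SpectralGap.

Section FloorLog.
Variable R : realType.

(* th = 0 is allowed: then l / th = 0 and ln 0 = 0. *)
Lemma ln_ratio_ge0 (l th : R) : 0 <= th -> th <= l -> 0 <= ln (l / th).
Proof.
move=> th_ge0 th_le_l; have [->|th_neq0] := eqVneq th 0; first by rewrite invr0 mulr0 ln0.
have th_gt0 : 0 < th by rewrite lt_neqAle eq_sym th_neq0.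
by rewrite ln_ge0 // ler_pdivlMr // mul1r.
Qed.

Lemma floor_log_ge1 (r L : R) : 1 <= r -> 0 <= ln L -> 1 <= Num.floor (1 + ln r / ln L).
Proof.
by move=> r_ge1 lnL_ge0; rewrite floor_ge_int mulr1z lerDl divr_ge0 // ln_ge0.
Qed.

Lemma floor_log_ratio_ge (l th a b : R) t : (0 < t)%N -> 0 < a -> 0 <= th -> th < l ->
  l ^+ t * a <= th ^+ t * b -> (t.+1 : int) <= Num.floor (1 + ln (b / a) / ln (l / th)).
Proof.
move=> t_gt0 a_gt0 th_ge0 th_lt_l decay.
have l_gt0 : 0 < l := le_lt_trans th_ge0 th_lt_l.
have lta_gt0 : 0 < l ^+ t * a by rewrite mulr_gt0 ?exprn_gt0.
have th_gt0 : 0 < th.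
  rewrite lt_neqAle th_ge0 andbT; apply: contraTneq decay => <-.
  by rewrite expr0n gtn_eqF // mul0r -ltNge.
have b_gt0 : 0 < b.
  by rewrite -(pmulr_rgt0 _ (exprn_gt0 t th_gt0)) (lt_le_trans lta_gt0).
have L_gt1 : 1 < l / th by rewrite ltr_pdivlMr // mul1r.
have L_gt0 : 0 < l / th := lt_trans ltr01 L_gt1.
have : t%:R * ln (l / th) <= ln (b / a).
  rewrite mulr_natl -lnXn // ler_ln ?posrE ?exprn_gt0 ?divr_gt0 //.
  by rewrite expr_div_n ler_pdivrMr ?exprn_gt0 // mulrAC ler_pdivlMr // [b * _]mulrC.
rewrite -ler_pdivlMr ?ln_gt0 // floor_ge_int -[(_ : int)%:~R]/(t.+1%:R) -natr1.
by rewrite addrC lerD2l.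
Qed.

End FloorLog.

Theorem theorem2 (R : realType) (n : nat) (E : {set {set 'I_n}})
  (lam : 'I_n -> R) (i0 : 'I_n) (X : 'cV[R]_n) :
  (forall e, e \in E -> (2 <= #|e|)%N) ->
  hconnected E ->
  (forall e, e \in E -> (3 <= #|e|)%N) ->
  (exists2 e, e \in E & #|e| = 3%N) ->
  (* lam lists the eigenvalues of A_G with multiplicity; lam i0 = lambda_max *)
  char_poly (hadj R E) = \prod_(i < n) ('X - (lam i)%:P) ->
  (forall i, lam i <= lam i0) ->
  (* X_1: unit eigenvector for lambda_max with positive entries *)
  hadj R E *m X = lam i0 *: X ->
  \sum_(i < n) X i 0 ^+ 2 = 1 ->
  (forall i, 0 < X i 0) ->
  let lmax := lam i0 in
  let alpha := \big[Num.min/X i0 0]_(i < n) X i 0 in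
  let theta := \big[Num.max/0]_(i < n | i != i0) `|lam i| in
  (hdiam E : int) <=
    Num.floor (1 + ln ((1 - alpha ^+ 2) / alpha ^+ 2) / ln (lmax / theta)).
Proof.
move=> hE2 hcon _ [e eE e_card] hchar _ hX X_unit Xpos /=.
set alpha := \big[Num.min/_]_(i < n) _; set theta := \big[Num.max/0]_(i < n | _) _.
have htri : exists2 e, e \in E & (2 < #|e|)%N by exists e; rewrite ?e_card.
have theta_lt := theta_lt_lmax hE2 hcon htri hchar hX Xpos X_unit.
have [D_le1|D_gt1] := leqP (hdiam E) 1.
  apply: le_trans (floor_log_ge1 (alpha_ratio_ge1 i0 htri Xpos X_unit) _).
    by rewrite lez_nat.
  exact: ln_ratio_ge0 (theta_ge0 _ _) (ltW theta_lt).
rewrite -(prednK (ltnW D_gt1)); apply: floor_log_ratio_ge (theta_ge0 _ _) theta_lt _.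
- by rewrite -ltnS prednK // ltnW.
- by rewrite exprn_gt0 ?(alpha_gt0 i0 Xpos).
rewrite leNgt; apply/negP => /(hdiam_le_gap hE2 hcon htri hchar hX Xpos X_unit).
by rewrite leqNgt ltn_predL (ltnW D_gt1).
Qed.
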